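(* Let $v$ be a simple game on $N=\{1,\dots,n\}$ and $i\in N$ a player with $\mathrm{Nuc}_i(v)<1$. Then $\mathrm{Nuc}_i(v)\le\frac12$.
   Context: A simple game on $N$ is a surjective, monotone map $v\colon 2^N\to\{0,1\}$. For $x\in\mathbb{R}^n$ and $S\subseteq N$ let $x(S)=\sum_{j\in S}x_j$ and the excess $e(S,x)=v(S)-x(S)$. Let $E(x)\in\mathbb{R}^{2^n}$ be the vector of all excesses $e(S,x)$, $S\subseteq N$, sorted in weakly decreasing order. $x$ is lexicographically smaller than $y$ if $E_k(x)<E_k(y)$ for the smallest $k$ with $E_k(x)\ne E_k(y)$. The nucleolus $\mathrm{Nuc}(v)$ is the unique lexicographically minimal vector $x$ among all $x\in\mathbb{R}^n$ with $x(N)\le 1$; for simple games it satisfies $\mathrm{Nuc}(v)\in\mathbb{R}^n_{\ge0}$ and $\sum_j\mathrm{Nuc}_j(v)=1$. *)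

From HB Require Import structures.
From mathcomp Require Import all_boot all_order all_algebra.
Set Implicit Arguments. Unset Strict Implicit. Unset Printing Implicit Defensive.
Import Order.TTheory GRing.Theory Num.Theory.
Local Open Scope ring_scope.

Definition simple_game (n : nat) (v : {set 'I_n} -> bool) : Prop :=
  (forall S T : {set 'I_n}, S \subset T -> v S -> v T) /\
  (exists S, v S = false) /\ (exists S, v S = true).

Definition coal_val (R : realFieldType) (n : nat) (x : 'I_n -> R) (S : {set 'I_n}) : R :=
  \sum_(j in S) x j.

Definition excess (R : realFieldType) (n : nat) (v : {set 'I_n} -> bool)
  (x : 'I_n -> R) (S : {set 'I_n}) : R :=
  (v S : nat)%:R - coal_val x S.

Definition excess_vec (R : realFieldType) (n : nat) (v : {set 'I_n} -> bool)
  (x : 'I_n -> R) : seq R :=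
  sort (fun a b : R => b <= a) [seq excess v x C | C <- enum {set 'I_n}].

Fixpoint lex_lt (R : realFieldType) (s t : seq R) : bool :=
  match s, t with
  | a :: s', b :: t' => (a < b) || ((a == b) && lex_lt s' t')
  | _, _ => false
  end.

Definition is_nucleolus (R : realFieldType) (n : nat) (v : {set 'I_n} -> bool)
  (x : 'I_n -> R) : Prop :=
  coal_val x setT <= 1 /\
  forall y : 'I_n -> R, coal_val y setT <= 1 -> ~~ lex_lt (excess_vec v y) (excess_vec v x).

From HB Require Import structures.
From mathcomp Require Import all_boot all_order all_algebra.
From mathcomp Require Import zify lra.
Import Order.TTheory GRing.Theory Num.Theory.
Set Implicit Arguments. Unset Strict Implicit. Unset Printing Implicit Defensive.
Local Open Scope ring_scope.

(* Every claim is proved by contradiction with lexicographic minimality: we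
   exhibit a transfer of payoff between two players that strictly lowers some
   excess lying at a level u or above, while no excess that ends up at u or
   above has increased. This first gives x(N) = 1 and x >= 0. If some winning
   coalition W omits i, then e(W) >= x_i, and if x_i > 1/2 moving x_i - 1/2
   from i into W lowers e(W) while every coalition containing i keeps excess
   below 1/2. Otherwise i is a veto player; a player j outside the veto
   players gets nothing, and any two veto players get the same payoff. As
   x_i < 1 some j <> i has x_j > 0, so j is a veto player too and
   2 x_i = x_i + x_j <= 1. *)

Lemma count_lt_subpred (T : eqType) (a b : pred T) (s : seq T) t0 :
  subpred a b -> t0 \in s -> b t0 -> ~~ a t0 -> (count a s < count b s)%N.
Proof.
move=> sub_ab; elim: s => //= t s IHs; rewrite in_cons => /orP [/eqP <- | t0s] bt0 at0.
  by rewrite (negbTE at0) bt0 add0n add1n ltnS sub_count.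
have := IHs t0s bt0 at0.
by case at_: (a t); [rewrite (sub_ab _ at_) ltn_add2l | case: (b t) => /=; lia].
Qed.

Section LexicographicOrder.
Variable R : realFieldType.
Local Notation geR := (fun a b : R => b <= a).

Lemma lex_lt_count (A B : seq R) (u : R) :
  sorted geR A -> sorted geR B -> size A = size B ->
  (count (>= u) A < count (>= u) B)%N ->
  (forall w, u <= w -> (count (>= w) A <= count (>= w) B)%N) ->
  lex_lt A B.
Proof.
have geR_trans : transitive geR by move=> p q r /= qp rq; exact: le_trans rq qp.
elim: A B => [|a A IHA] [|b B] //= sA sB [sizeAB] cnt_u cnt_w.
have cnt0 c : b < c -> ((c <= b)%R + count (>= c) B)%N = 0%N.
  move=> bc; rewrite (lt_geF bc) add0n (eq_in_count (a2 := pred0)) ?count_pred0 //.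
  move=> z /(allP (order_path_min geR_trans sB)) zb /=.
  by apply/negbTE; rewrite -ltNge; exact: le_lt_trans zb bc.
case: (ltgtP a b) => ab //=.
- have [ua | au] := leP u a; first by have := cnt_w a ua; rewrite cnt0 //= lexx; lia.
  by move: cnt_u; rewrite cnt0 //; exact: lt_trans ab au.
- subst b; apply: IHA; rewrite ?(path_sorted sA) ?(path_sorted sB) //.
    by rewrite ltn_add2l in cnt_u.
  by move=> w uw; have := cnt_w w uw; rewrite leq_add2l.
Qed.

Lemma lex_lt_sort_map (T : eqType) (s : seq T) (f g : T -> R) u t0 :
  (forall t, u <= f t -> f t <= g t) -> t0 \in s -> u <= g t0 -> f t0 < u ->
  lex_lt (sort geR [seq f t | t <- s]) (sort geR [seq g t | t <- s]).
Proof.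
move=> fg t0s ug ltfu.
have total_geR : total geR by move=> p q; rewrite le_total.
have count_sort r p : count p (sort geR r) = count p r by apply/permP; rewrite perm_sort.
apply: (@lex_lt_count _ _ u); rewrite ?sort_sorted ?size_sort ?size_map //.
- rewrite !count_sort !count_map; apply: (@count_lt_subpred _ _ _ _ t0) => //=.
    by move=> t /= uf; exact: le_trans uf (fg _ uf).
  by rewrite -ltNge.
- move=> w uw; rewrite !count_sort !count_map; apply: sub_count => t /= wf.
  exact: le_trans wf (fg _ (le_trans uw wf)).
Qed.

End LexicographicOrder.

Section Payoffs.
Variables (R : realFieldType) (n : nat).
Implicit Types (x : 'I_n -> R) (S : {set 'I_n}).

Lemma coal_val_set1 x j : coal_val x [set j] = x j.
Proof. exact: big_set1. Qed.

Lemma coal_val_setU1 x j S : j \notin S -> coal_val x (j |: S) = x j + coal_val x S.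
Proof. exact: big_setU1. Qed.

Lemma coal_val_setTC x S : coal_val x setT = coal_val x S + coal_val x (~: S).
Proof. by rewrite /coal_val (big_setID S) /= setTI setTD. Qed.

Lemma excessE (v : {set 'I_n} -> bool) x S :
  excess v x S = (if v S then 1 else 0) - coal_val x S.
Proof. by rewrite /excess; case: (v S). Qed.

Definition shift x (j : 'I_n) (c : R) : 'I_n -> R :=
  fun l => x l + (if l == j then c else 0).

Lemma coal_val_shift x j c S :
  coal_val (shift x j c) S = coal_val x S + (if j \in S then c else 0).
Proof.
rewrite /coal_val /shift big_split /=; congr (_ + _).
case: (boolP (j \in S)) => jS; last first.
  by rewrite big1 // => l lS; case: eqP => // lj; rewrite -lj lS in jS.
by rewrite (bigD1 j) //= eqxx big1 ?addr0 // => l /andP [_ /negbTE ->].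
Qed.

Definition transfer x (a b : 'I_n) (d : R) : 'I_n -> R := shift (shift x a (- d)) b d.

Lemma coal_val_transfer x a b d S :
  coal_val (transfer x a b d) S =
  coal_val x S - (if a \in S then d else 0) + (if b \in S then d else 0).
Proof. by rewrite /transfer !coal_val_shift; case: (a \in S); rewrite ?subr0 ?addr0. Qed.

Lemma coal_val_transferT x a b d : coal_val (transfer x a b d) setT = coal_val x setT.
Proof. by rewrite coal_val_transfer !in_setT addrNK. Qed.

Lemma excess_transfer (v : {set 'I_n} -> bool) x a b d S :
  excess v (transfer x a b d) S =
  excess v x S + (if a \in S then d else 0) - (if b \in S then d else 0).
Proof. by rewrite /excess coal_val_transfer !opprD opprK !addrA. Qed.

End Payoffs.

Definition veto (n : nat) (v : {set 'I_n} -> bool) (i : 'I_n) : Prop :=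
  forall S, v S -> i \in S.

Lemma vetoVwinning_without (n : nat) (v : {set 'I_n} -> bool) (i : 'I_n) :
  veto v i \/ exists2 W, v W & i \notin W.
Proof.
case: (boolP [exists W, v W && (i \notin W)]) => [/existsP [W /andP []] | /existsPn none].
  by right; exists W.
by left => S vS; move: (none S); rewrite vS negbK.
Qed.

Section Nucleolus.
Variables (R : realFieldType) (n : nat) (v : {set 'I_n} -> bool) (x : 'I_n -> R).
Hypotheses (game : simple_game v) (nuc : is_nucleolus v x).
Implicit Types (S W : {set 'I_n}) (i j : 'I_n).

Lemma simple_game_mono {S T : {set 'I_n}} : S \subset T -> v S -> v T.
Proof. exact: game.1. Qed.

Lemma simple_game_set0 : v set0 = false.
Proof.
have [[S vS] _] := game.2.
by apply/negP => v0; have := simple_game_mono (sub0set S) v0; rewrite vS.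
Qed.

Lemma simple_game_setT : v setT.
Proof. by have [_ [S vS]] := game.2; exact: simple_game_mono (subsetT S) vS. Qed.

Lemma nucleolus_unimprovable y u S0 :
  coal_val y setT <= 1 ->
  (forall S, u <= excess v y S -> excess v y S <= excess v x S) ->
  u <= excess v x S0 -> excess v y S0 < u -> False.
Proof.
move=> yN le_yx uS0 yS0; move/negP: (nuc.2 y yN); apply.
by apply: (@lex_lt_sort_map _ _ _ _ _ u S0 le_yx _ uS0 yS0); rewrite mem_enum.
Qed.

Lemma nucleolus_transfer_unimprovable a b d u S0 :
  (forall S, u <= excess v (transfer x a b d) S ->
     excess v (transfer x a b d) S <= excess v x S) ->
  u <= excess v x S0 -> excess v (transfer x a b d) S0 < u -> False.
Proof. by apply: nucleolus_unimprovable; rewrite coal_val_transferT nuc.1. Qed.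

Lemma nucleolus_efficient : coal_val x setT = 1.
Proof.
apply/eqP; rewrite eq_le nuc.1 /= leNgt; apply/negP => xN_lt1.
have [N0 | [k _]] := set_0Vmem [set: 'I_n].
  by have := simple_game_setT; rewrite N0 simple_game_set0.
pose c := 1 - coal_val x setT.
apply: (@nucleolus_unimprovable (shift x k c) (excess v x setT) setT) => //.
- by rewrite coal_val_shift in_setT /c; lra.
- by move=> S _; rewrite /excess coal_val_shift /c; case: (k \in S); lra.
- by rewrite /excess coal_val_shift in_setT /c; lra.
Qed.

(* If x_j < 0, a coalition S' of maximal excess contains j and misses some k;
   moving -x_j/2 from k to j lowers e(S') and no excess reaches e(S'). *)
Lemma nucleolus_ge0 j : 0 <= x j.
Proof.
rewrite leNgt; apply/negP => xj_lt0.
have [S' S'max] : exists S', forall S, excess v x S <= excess v x S'.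
  case: (@arg_maxP _ _ _ set0 predT (excess v x)) => // S' _ S'max.
  by exists S' => S; exact: S'max.
have e_addj (S : {set 'I_n}) : j \notin S -> excess v x S - x j <= excess v x (j |: S).
  move=> jS; rewrite !excessE coal_val_setU1 //.
  have := simple_game_mono (subsetUr [set j] S).
  by case: (v S); case: (v (j |: S)) => vjS; [lra | have := vjS isT | lra | lra].
have jS' : j \in S'.
  by apply/negPn/negP => jS'; have := e_addj _ jS'; have := S'max (j |: S'); lra.
have [k kS'] : exists k, k \notin S'.
  have [S'C0 | [k]] := set_0Vmem (~: S'); last by rewrite inE; exists k.
  have S'T : S' = setT by rewrite -[S']setCK S'C0 setC0.
  have := S'max [set j]; rewrite S'T !excessE simple_game_setT nucleolus_efficient.
  by rewrite coal_val_set1; case: (v [set j]); lra.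
pose d := - x j / 2.
apply: (@nucleolus_transfer_unimprovable k j d (excess v x S') S') => //.
- move=> S; rewrite excess_transfer /d.
  case jS: (j \in S); case kS: (k \in S) => /= ; try lra.
  by have := e_addj S (negbT jS); have := S'max (j |: S); lra.
- by rewrite excess_transfer jS' (negbTE kS') /d; lra.
Qed.

Lemma coal_val_ge_mem S j : j \in S -> x j <= coal_val x S.
Proof.
move=> jS; rewrite /coal_val (bigD1 j) //= lerDl.
by apply: sumr_ge0 => l _; exact: nucleolus_ge0.
Qed.

Lemma excess_le S : excess v x S <= 1 - coal_val x S.
Proof. by rewrite excessE; case: (v S); lra. Qed.

Lemma excess_losing S : v S = false -> excess v x S = - coal_val x S.
Proof. by rewrite excessE => ->; rewrite add0r. Qed.

Lemma nucleolus_add_le1 S j : j \notin S -> x j + coal_val x S <= 1.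
Proof.
move=> jS; rewrite -nucleolus_efficient (coal_val_setTC _ S) addrC lerD2l.
by apply: coal_val_ge_mem; rewrite inE.
Qed.

Lemma nucleolus_le_half_of_winning_without W i :
  v W -> i \notin W -> x i <= 1 / 2.
Proof.
move=> vW iW; rewrite leNgt; apply/negP => half_lt_xi.
have [W0 | [k kW]] := set_0Vmem W; first by rewrite W0 simple_game_set0 in vW.
have eW : x i <= excess v x W.
  by rewrite excessE vW; have := nucleolus_add_le1 iW; lra.
pose d := x i - 1 / 2.
apply: (@nucleolus_transfer_unimprovable i k d (excess v x W) W) => //.
- move=> S; rewrite excess_transfer /d.
  case iS: (i \in S); case kS: (k \in S) => /=; try lra.
  by have := excess_le S; have := coal_val_ge_mem iS; lra.
- by rewrite excess_transfer (negbTE iW) kW /d; lra.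
Qed.

(* Here the payoff of j is handed to the veto player i: coalitions gaining
   from it are losing, and the winning coalition N \ {j} drops to excess 0. *)
Lemma nucleolus_nonveto_eq0 i j : veto v i -> v (~: [set j]) -> x j = 0.
Proof.
move=> veto_i vNj; apply/eqP; rewrite eq_le nucleolus_ge0 andbT leNgt.
apply/negP => xj_gt0.
have iNj : i \in ~: [set j] := veto_i _ vNj.
have eNj : excess v x (~: [set j]) = x j.
  by rewrite excessE vNj; have := coal_val_setTC x [set j];
     rewrite nucleolus_efficient coal_val_set1; lra.
apply: (@nucleolus_transfer_unimprovable j i (x j) (x j) (~: [set j])).
- move=> S; rewrite excess_transfer.
  case jS: (j \in S); case iS: (i \in S) => /=; try lra.
  have vS : v S = false by apply/negP => /veto_i; rewrite iS.
  by rewrite excess_losing //; have := coal_val_ge_mem jS; lra.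
- by rewrite eNj.
- by rewrite excess_transfer iNj !inE eqxx eNj /=; lra.
Qed.

Lemma nucleolus_veto_le i j : veto v i -> veto v j -> x i <= x j.
Proof.
move=> veto_i veto_j; have [-> // | ij] := eqVneq i j.
rewrite leNgt; apply/negP => xj_lt_xi.
have ej : excess v x [set j] = - x j.
  rewrite excess_losing ?coal_val_set1 //.
  by apply/negP => /veto_i; rewrite inE (negbTE ij).
pose d := (x i - x j) / 2.
apply: (@nucleolus_transfer_unimprovable i j d (- x j) [set j]).
- move=> S; rewrite excess_transfer /d.
  case iS: (i \in S); case jS: (j \in S) => /=; try lra.
  have vS : v S = false by apply/negP => /veto_j; rewrite jS.
  by rewrite excess_losing //; have := coal_val_ge_mem iS; lra.
- by rewrite ej.
- by rewrite excess_transfer !inE (negbTE ij) eqxx ej /d; lra.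
Qed.

End Nucleolus.

Theorem theorem5 (R : realFieldType) (n : nat) (v : {set 'I_n} -> bool)
  (x : 'I_n -> R) (i : 'I_n) :
  simple_game v -> is_nucleolus v x -> x i < 1 -> x i <= 1 / 2.
Proof.
move=> game nuc xi_lt1.
have [veto_i | [W vW iW]] := vetoVwinning_without v i; last first.
  exact: nucleolus_le_half_of_winning_without vW iW.
have [j ji xj_gt0] : exists2 j, j != i & 0 < x j.
  case: (boolP [exists j, (j != i) && (0 < x j)]) => [/existsP [j /andP []] | /existsPn none].
    by exists j.
  have : coal_val x (~: [set i]) <= 0.
    by apply: sumr_le0 => l; rewrite !inE => li; move: (none l); rewrite li -leNgt.
  by have := coal_val_setTC x [set i]; rewrite (nucleolus_efficient game nuc) coal_val_set1; lra.
have veto_j : veto v j.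
  move=> S vS; apply/negPn/negP => jS.
  have vNj : v (~: [set j]).
    apply: (simple_game_mono game) vS; apply/subsetP => l lS.
    by rewrite !inE; apply: contraNneq jS => <-.
  by have := nucleolus_nonveto_eq0 game nuc veto_i vNj; lra.
have i_notin_j : i \notin [set j] by rewrite inE eq_sym.
have := nucleolus_veto_le game nuc veto_i veto_j.
by have := nucleolus_add_le1 game nuc i_notin_j; rewrite coal_val_set1; lra.
Qed.
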